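(* Let $A\in {\operatorname{\mathsf{TPD}}}_n(\mathbb{S}_{\max}^\vee)$, with $\gamma_i=a_{ii}$ for $i\in[n]$ ordered so that $\gamma_1\succeq\gamma_2\succeq\cdots\succeq\gamma_n$, and $B_k=\gamma_k I\ominus A$. Assume that $\gamma=\gamma_1$ is simple as an algebraic $\mathbb{S}_{\max}$-eigenvalue of $A$, that is $\gamma_1\succ \gamma_2$. Then, we have \[ v^{(1)}=(\gamma I \ominus A )^{\mathrm{adj}}_{:,1}=\gamma^{n-1} (\gamma^{-1}A)^*_{:,1}\enspace .\] Moreover $A v^{(1)}= \gamma v^{(1)}$. In particular, when $v^{(1)} \in (\mathbb{S}_{\max}^\vee)^n$, $v^{(1)}$ is the unique leading $\mathbb{S}_{\max}$-eigenvector (up to a multiplicative constant), and this is a strong $\mathbb{S}_{\max}$-eigenvector.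
   Context: $\mathbb{S}_{\max}$ is the symmetrized tropical semiring over a divisible totally ordered abelian group, with zero $\mathbf{0}$, unit $\mathbf{1}$, minus $\ominus$; $\mathbb{S}_{\max}^\vee$ is the set of signed elements (positive, negative or $\mathbf{0}$), and $a\,\nabla\, b$ iff $a\ominus b$ is balanced. $a\preceq b$ iff $b=a\oplus b$, and $a\prec b$ iff $a\preceq b$, $a\neq b$. $A\in{\operatorname{\mathsf{TPD}}}_n(\mathbb{S}_{\max}^\vee)$: $A$ symmetric with signed entries, $\mathbf{0}<a_{ii}$ and $a_{ij}^2<a_{ii}a_{jj}$ for $i\ne j$ (where $a<b$ iff $b\ominus a$ is positive). $\det$ is the signed determinant and $(M^{\mathrm{adj}})_{ij}=(\ominus\mathbf{1})^{i+j}\det M[\hat j,\hat i]$; $M_{:,j}$ is the $j$-th column. The Kleene star is $M^*=\bigoplus_{k\ge0}M^k$ (with $M^0=I$). An $\mathbb{S}_{\max}$-eigenvector for the eigenvalue $\gamma$ is a $v\in(\mathbb{S}_{\max}^\vee)^n\setminus\{\mathbf{0}\}$ with $Av\,\nabla\,\gamma v$; it is strong if $Av=\gamma v$; a leading eigenvector is one associated with the largest eigenvalue $\gamma_1$. The $\mathbb{S}_{\max}$-eigenvalues of $A$ are its diagonal entries. *)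

(* Symmetrized tropical semiring S_max over a divisible
   totally ordered abelian group (written additively here). *)
From mathcomp Require Import all_boot all_order all_algebra.
From mathcomp Require Import perm.
Set Implicit Arguments. Unset Strict Implicit. Unset Printing Implicit Defensive.
Import GRing.Theory.
Local Open Scope ring_scope.

Record divTOAG := DivTOAG {
  tog_car :> zmodType;
  tog_le : rel tog_car;
  tog_refl : reflexive tog_le;
  tog_antisym : forall a b, tog_le a b -> tog_le b a -> a = b;
  tog_trans : transitive tog_le;
  tog_total : total tog_le;
  tog_addr : forall a b c, tog_le a b -> tog_le (a + c) (b + c);
  tog_div : forall (n : nat) (g : tog_car), (0 < n)%N -> exists h, h *+ n = g
}.

Section Smax.
Variable T : divTOAG.
Local Notation G := (tog_car T).


(* Elements of S_max: 0, positive (+)g, negative (-)g, balanced g^o. *)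
Inductive smax := SZero | SPos of G | SNeg of G | SBal of G.

Definition smod (x : smax) : G :=
  match x with SZero => 0 | SPos g => g | SNeg g => g | SBal g => g end.

Definition sadd (x y : smax) : smax :=
  match x, y with
  | SZero, _ => y
  | _, SZero => x
  | _, _ =>
    if smod x == smod y then
      match x, y with
      | SPos g, SPos _ => SPos g
      | SNeg g, SNeg _ => SNeg g
      | _, _ => SBal (smod x)
      end
    else if @tog_le T (smod x) (smod y) then y else x
  end.

Definition smul (x y : smax) : smax :=
  match x, y with
  | SZero, _ | _, SZero => SZero
  | SPos g, SPos h => SPos (g + h)
  | SPos g, SNeg h => SNeg (g + h)
  | SNeg g, SPos h => SNeg (g + h)
  | SNeg g, SNeg h => SPos (g + h)
  | _, _ => SBal (smod x + smod y)
  end.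

Definition sopp (x : smax) : smax :=
  match x with SZero => SZero | SPos g => SNeg g | SNeg g => SPos g | SBal g => SBal g end.

Definition sone : smax := SPos 0.

Definition sinv (x : smax) : smax :=
  match x with SZero => SZero | SPos g => SPos (- g) | SNeg g => SNeg (- g) | SBal g => SBal (- g) end.

Definition sexp (x : smax) (k : nat) : smax := iter k (smul x) sone.

Definition ssgnpow (k : nat) : smax := if odd k then sopp sone else sone.

Definition is_pos (x : smax) : Prop := exists g, x = SPos g.
Definition signed (x : smax) : Prop := forall g, x <> SBal g.
Definition balanced (x : smax) : Prop := x = SZero \/ exists g, x = SBal g.

Definition snabla (a b : smax) : Prop := balanced (sadd a (sopp b)).
Definition slt (a b : smax) : Prop := is_pos (sadd b (sopp a)).
Definition spreceq (a b : smax) : Prop := b = sadd a b.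
Definition sprec (a b : smax) : Prop := spreceq a b /\ a <> b.

Definition smx_mul m n p (A : 'M[smax]_(m, n)) (B : 'M[smax]_(n, p)) : 'M[smax]_(m, p) :=
  \matrix_(i, j) \big[sadd/SZero]_(k < n) smul (A i k) (B k j).
Definition smx_add m n (A B : 'M[smax]_(m, n)) : 'M[smax]_(m, n) :=
  \matrix_(i, j) sadd (A i j) (B i j).
Definition smx_zero m n : 'M[smax]_(m, n) := \matrix_(i, j) SZero.
Definition smx_id n : 'M[smax]_n := \matrix_(i, j) if i == j then sone else SZero.
Definition smx_scale m n (c : smax) (A : 'M[smax]_(m, n)) : 'M[smax]_(m, n) :=
  \matrix_(i, j) smul c (A i j).
Definition smx_opp m n (A : 'M[smax]_(m, n)) : 'M[smax]_(m, n) :=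
  \matrix_(i, j) sopp (A i j).
Definition smx_pow n (A : 'M[smax]_n) (k : nat) : 'M[smax]_n :=
  iter k (smx_mul A) (smx_id n).

Definition sdet n (M : 'M[smax]_n) : smax :=
  \big[sadd/SZero]_(s : 'S_n)
     smul (if odd_perm s then sopp sone else sone)
          (\big[smul/sone]_(i < n) M i (s i)).

Definition sadj n (M : 'M[smax]_n.+1) : 'M[smax]_n.+1 :=
  \matrix_(i, j) smul (ssgnpow (i + j)) (sdet (row' j (col' i M))).

(* Kleene star: S = (+)_{k>=0} M^k, meaning the partial sums
   (+)_{k<=N} M^k are eventually equal to S. *)
Definition smx_partial_star n (M : 'M[smax]_n) (N : nat) : 'M[smax]_n :=
  \big[@smx_add n n/smx_zero n n]_(k < N.+1) smx_pow M k.
Definition is_kleene_star n (M S : 'M[smax]_n) : Prop :=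
  exists N, forall m, (N <= m)%N -> smx_partial_star M m = S.

Definition TPD n (A : 'M[smax]_n) : Prop :=
  [/\ forall i j, A i j = A j i,
      forall i j, signed (A i j),
      forall i, slt SZero (A i i)
    & forall i j, i != j -> slt (smul (A i j) (A i j)) (smul (A i i) (A j j))].

Definition signed_vec n (v : 'cV[smax]_n) : Prop := forall i, signed (v i 0).
Definition is_seigvec n (A : 'M[smax]_n) (g : smax) (v : 'cV[smax]_n) : Prop :=
  [/\ signed_vec v, exists i, v i 0 <> SZero
    & forall i, snabla (smx_mul A v i 0) (smul g (v i 0))].
Definition is_strong_seigvec n (A : 'M[smax]_n) (g : smax) (v : 'cV[smax]_n) : Prop :=
  is_seigvec A g v /\ smx_mul A v = smx_scale g v.

End Smax.

(* Let γ = a₀₀ = SPos g and Â = γ⁻¹A (index 0 is the paper's index 1). The TPD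
   inequalities and γ₁ ≻ γ₂ say that Â₀₀ = 1 while every other entry of Â has
   modulus < 1. Hence every walk in Â weighs ⪯ 1, cycles can be cut out of
   walks, and Â* = ⊕_{k ≤ n} Âᵏ.
   The (i,0) cofactor of γI ⊖ A is a signed sum over permutations. The term of
   a permutation σ equals, or is strictly dominated in modulus by, the term of
   the permutation that keeps only the cycle of σ through i and 0 -- a simple
   path from i to 0 -- and fixes every other index, where the diagonal entry γ
   dominates its row. The term of a path w is γⁿ times the Â-weight of w, the
   signs cancelling, so v = γⁿ Â*_{:,0}; and Â₀₀ = 1 gives Â Â*_{:,0} = Â*_{:,0},
   i.e. A v = γ v.
   For uniqueness, the rows i ≠ 0 of Â w ∇ w have coefficients of modulus < 1:
   comparing w with w₀ Â*_{:,0} at an index where the larger of the two moduli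
   is maximal forces equality there, and induction on the other indices
   concludes. *)

From HB Require Import structures.
From mathcomp Require Import all_boot all_order all_algebra perm.
From mathcomp Require Import zify.
Set Implicit Arguments. Unset Strict Implicit. Unset Printing Implicit Defensive.
Import Order.TTheory GRing.Theory.
Local Open Scope ring_scope.

Local Notation "x ⊕ y" := (sadd x y) (at level 50, left associativity).
Local Notation "x ⊗ y" := (smul x y) (at level 40, left associativity).
Local Notation "⊖ x" := (sopp x) (at level 35, right associativity).
Local Notation "x ⪯ y" := (spreceq x y) (at level 70, no associativity).

Lemma tog_anti (T : divTOAG) : antisymmetric (@tog_le T).
Proof. by move=> a b /andP[]; apply: tog_antisym. Qed.

#[non_forgetful_inheritance]
HB.instance Definition _ (T : divTOAG) :=
  Order.Le_isPOrder.Build ring_display (tog_car T) (@tog_refl T) (@tog_anti T) (@tog_trans T).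
#[non_forgetful_inheritance]
HB.instance Definition _ (T : divTOAG) :=
  Order.POrder_isTotal.Build ring_display (tog_car T) (@tog_total T).

Section OrderedGroup.
Variable T : divTOAG.
Implicit Types a b c d : tog_car T.

Lemma togleE a b : tog_le a b = (a <= b). Proof. by []. Qed.

Lemma tog_leD2l c a b : (c + a <= c + b) = (a <= b).
Proof.
apply/idP/idP => h; last by rewrite ![c + _]addrC; apply: tog_addr.
by have := tog_addr (- c) h; rewrite ![c + _]addrC !addrK.
Qed.

Lemma tog_ltD2l c a b : (c + a < c + b) = (a < b).
Proof. by rewrite !lt_def (inj_eq (addrI c)) tog_leD2l. Qed.

Lemma tog_leD a b c d : a <= b -> c <= d -> a + c <= b + d.
Proof.
move=> hab hcd; apply: (le_trans (tog_addr c hab)).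
by rewrite ![b + _]addrC; apply: tog_addr.
Qed.

Lemma tog_lt_leD a b c d : a < b -> c <= d -> a + c < b + d.
Proof.
move=> hab hcd; apply: (lt_le_trans _ (tog_leD (lexx b) hcd)).
by rewrite ![_ + c]addrC tog_ltD2l.
Qed.

Lemma tog_le_ltD a b c d : a <= b -> c < d -> a + c < b + d.
Proof. by move=> hab hcd; rewrite addrC [b + _]addrC; apply: tog_lt_leD. Qed.

End OrderedGroup.

Ltac lt_absurd := match goal with
  | H : is_true (?a < ?a)%O |- _ => by rewrite ltxx in H
  | H1 : is_true (?a < ?b)%O, H2 : is_true (?b < ?a)%O |- _ =>
      by have := lt_trans H1 H2; rewrite ltxx
  | H1 : is_true (?a < ?b)%O, H2 : is_true (?b < ?c)%O, H3 : is_true (?c < ?a)%O |- _ =>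
      by have := lt_trans (lt_trans H1 H2) H3; rewrite ltxx
  end.

Ltac case_moduli :=
  rewrite ?togleE;
  repeat (match goal with
  | |- context [(?a <= ?b)%O] => case: (ltgtP a b)
  | |- context [(?a < ?b)%O] => case: (ltgtP a b)
  | |- context [?a == ?b :> tog_car _] => case: (ltgtP a b)
  end; move=> ?; subst; rewrite ?eqxx ?lexx ?ltxx /=; try lt_absurd).


Section Semiring.
Variable T : divTOAG.
Local Notation S := (smax T).
Local Notation s0 := (@SZero T).
Local Notation s1 := (sone T).

Lemma addsC : commutative (@sadd T).
Proof. by case=> [|a|a|a] [|b|b|b] //; rewrite /sadd /=; case_moduli. Qed.

Lemma addsA : associative (@sadd T).
Proof. by case=> [|a|a|a] [|b|b|b] [|c|c|c] //; rewrite /sadd /=; case_moduli. Qed.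

Lemma add0s : left_id s0 (@sadd T). Proof. by []. Qed.
Lemma adds0 : right_id s0 (@sadd T). Proof. by case. Qed.
Lemma addss (x : S) : x ⊕ x = x. Proof. by case: x => // a; rewrite /sadd /= eqxx. Qed.

Lemma mulsC : commutative (@smul T).
Proof. by case=> [|a|a|a] [|b|b|b] //; rewrite /smul /= addrC. Qed.

Lemma mulsA : associative (@smul T).
Proof. by case=> [|a|a|a] [|b|b|b] [|c|c|c]; rewrite /smul /= ?addrA. Qed.

Lemma mul1s : left_id s1 (@smul T). Proof. by case=> [|a|a|a]; rewrite /smul /= ?add0r. Qed.
Lemma muls1 : right_id s1 (@smul T). Proof. by move=> x; rewrite mulsC mul1s. Qed.
Lemma mul0s : left_zero s0 (@smul T). Proof. by []. Qed.
Lemma muls0 : right_zero s0 (@smul T). Proof. by case. Qed.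

Lemma mulsDr : right_distributive (@smul T) (@sadd T).
Proof.
case=> [|c|c|c] [|a|a|a] [|b|b|b]; rewrite ?adds0 ?muls0 //;
  by rewrite /sadd /smul /= ?togleE ?tog_leD2l ?(inj_eq (addrI c)); case_moduli.
Qed.

Lemma mulsCA : left_commutative (@smul T).
Proof. by move=> x y z; rewrite !mulsA (mulsC x). Qed.

Lemma mulsAC : right_commutative (@smul T).
Proof. by move=> x y z; rewrite -!mulsA (mulsC y). Qed.

End Semiring.

HB.instance Definition _ (T : divTOAG) :=
  Monoid.isComLaw.Build (smax T) (@SZero T) (@sadd T) (@addsA T) (@addsC T) (@add0s T).
HB.instance Definition _ (T : divTOAG) :=
  Monoid.isComLaw.Build (smax T) (sone T) (@smul T) (@mulsA T) (@mulsC T) (@mul1s T).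

Definition smax_eqb (T : divTOAG) (x y : smax T) :=
  match x, y with
  | SZero, SZero => true
  | SPos a, SPos b | SNeg a, SNeg b | SBal a, SBal b => a == b
  | _, _ => false
  end.

Lemma smax_eqP (T : divTOAG) : Equality.axiom (@smax_eqb T).
Proof.
by case=> [|a|a|a] [|b|b|b] /=; try (by constructor); apply: (iffP eqP) => [->|[]].
Qed.

HB.instance Definition _ (T : divTOAG) := hasDecEq.Build (smax T) (@smax_eqP T).

Arguments smul : simpl never.
Arguments sadd : simpl never.
Arguments sopp : simpl never.

Section Opposite.
Variable T : divTOAG.
Local Notation S := (smax T).
Local Notation s1 := (sone T).
Implicit Types x y z : S.

Lemma oppsK : involutive (@sopp T). Proof. by case. Qed.

Lemma oppsD x y : ⊖ (x ⊕ y) = ⊖ x ⊕ ⊖ y.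
Proof. by case: x y => [|a|a|a] [|b|b|b]; rewrite /sadd /sopp /=; case_moduli. Qed.

Lemma mulNs x y : ⊖ x ⊗ y = ⊖ (x ⊗ y). Proof. by case: x y => [|a|a|a] [|b|b|b]. Qed.
Lemma mulsN x y : x ⊗ ⊖ y = ⊖ (x ⊗ y). Proof. by rewrite mulsC mulNs mulsC. Qed.
Lemma mulN1s x : ⊖ s1 ⊗ x = ⊖ x. Proof. by rewrite mulNs mul1s. Qed.

Definition ssgn (b : bool) : S := if b then ⊖ s1 else s1.

Lemma ssgnM b c : ssgn b ⊗ ssgn c = ssgn (b (+) c).
Proof. by case: b; case: c; rewrite /ssgn /= ?mul1s ?muls1 // mulNs mul1s oppsK. Qed.

Lemma ssgnpowE k : ssgnpow T k = ssgn (odd k). Proof. by []. Qed.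

Lemma sexpS x k : sexp x k.+1 = x ⊗ sexp x k. Proof. by []. Qed.

Lemma sexpD x a b : sexp x (a + b) = sexp x a ⊗ sexp x b.
Proof. by elim: a => [|a IH]; rewrite ?mul1s // addSn !sexpS IH mulsA. Qed.

Lemma sexpMn x y k : sexp (x ⊗ y) k = sexp x k ⊗ sexp y k.
Proof.
elim: k => [|k IH]; first by rewrite mul1s.
by rewrite !sexpS IH -!mulsA (mulsCA y).
Qed.

Lemma sexp1n k : sexp s1 k = s1.
Proof. by elim: k => // k IH; rewrite sexpS IH mul1s. Qed.

Lemma sexp_SPos (g : tog_car T) k : sexp (SPos g) k = SPos (g *+ k).
Proof. by elim: k => // k IH; rewrite sexpS IH /smul /= mulrS. Qed.

Lemma sexpN1 k : sexp (⊖ s1) k = ssgn (odd k).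
Proof. by elim: k => // k IH; rewrite sexpS IH -[⊖ s1]/(ssgn true) ssgnM. Qed.

End Opposite.

Section NaturalOrder.
Variable T : divTOAG.
Local Notation S := (smax T).
Local Notation s0 := (@SZero T).
Implicit Types x y z : S.

Lemma spreceq_refl x : x ⪯ x. Proof. by rewrite /spreceq addss. Qed.

Lemma spreceq_trans y x z : x ⪯ y -> y ⪯ z -> x ⪯ z.
Proof. by rewrite /spreceq => h1 h2; rewrite h2 addsA -h1. Qed.

Lemma spreceq_anti x y : x ⪯ y -> y ⪯ x -> x = y.
Proof. by rewrite /spreceq => h1 h2; rewrite h2 {2}h1 addsC. Qed.

Lemma spreceq_addl x y : x ⪯ x ⊕ y. Proof. by rewrite /spreceq addsA addss. Qed.
Lemma spreceq_addr x y : y ⪯ x ⊕ y. Proof. by rewrite addsC; apply: spreceq_addl. Qed.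

Lemma spreceq_lub x y z : x ⪯ z -> y ⪯ z -> x ⊕ y ⪯ z.
Proof. by rewrite /spreceq => h1 h2; rewrite -addsA -h2 -h1. Qed.

Lemma spreceq_mul2l z x y : x ⪯ y -> z ⊗ x ⪯ z ⊗ y.
Proof. by rewrite /spreceq => h; rewrite -mulsDr -h. Qed.

Lemma spreceq_big_lub (I : Type) (r : seq I) (P : pred I) (F : I -> S) z :
  (forall i, P i -> F i ⪯ z) -> \big[@sadd T/s0]_(i <- r | P i) F i ⪯ z.
Proof. by move=> h; elim/big_rec: _ => // i x Pi hx; apply: spreceq_lub (h i Pi) hx. Qed.

Lemma spreceq_big_term (I : finType) (P : pred I) (F : I -> S) i :
  P i -> F i ⪯ \big[@sadd T/s0]_(j | P j) F j.
Proof. by move=> Pi; rewrite (bigD1 i) //=; apply: spreceq_addl. Qed.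

Lemma spreceq_big_ord m (F : nat -> S) i :
  (i < m)%N -> F i ⪯ \big[@sadd T/s0]_(j < m) F j.
Proof. by move=> im; apply: (spreceq_big_term (fun j : 'I_m => F j) (i := Ordinal im)). Qed.

Lemma muls_sumr (I : Type) (r : seq I) (P : pred I) (F : I -> S) z :
  z ⊗ \big[@sadd T/s0]_(i <- r | P i) F i = \big[@sadd T/s0]_(i <- r | P i) (z ⊗ F i).
Proof. by apply: (big_endo (smul z)); [apply: mulsDr | apply: muls0]. Qed.

End NaturalOrder.

Section Moduli.
Variable T : divTOAG.
Local Notation S := (smax T).
Local Notation s0 := (@SZero T).
Local Notation s1 := (sone T).
Implicit Types a b c d x y z : S.

Definition mod_le x y := (x == s0) || ((y != s0) && (smod x <= smod y)).
Definition mod_lt x y := ~~ mod_le y x.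

Lemma mod_ltE x y : mod_lt x y = (y != s0) && ((x == s0) || (smod x < smod y)).
Proof. by rewrite /mod_lt /mod_le negb_or negb_and negbK -ltNge. Qed.

Lemma mod_le_refl x : mod_le x x.
Proof. by rewrite /mod_le lexx andbT orbN. Qed.

Lemma mod_le_trans y x z : mod_le x y -> mod_le y z -> mod_le x z.
Proof.
rewrite /mod_le; case: eqP => //= _ /andP[/negPf-> hxy] /andP[-> hyz] /=.
exact: le_trans hxy hyz.
Qed.

Lemma mod_le_total x y : mod_le x y || mod_le y x.
Proof. by rewrite /mod_le; case: eqP; case: eqP => //= _ _; apply: le_total. Qed.

Lemma mod_le0 x : mod_le x s0 = (x == s0).
Proof. by rewrite /mod_le eqxx orbF. Qed.

Lemma mod_ltW x y : mod_lt x y -> mod_le x y.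
Proof. by rewrite /mod_lt; case/orP: (mod_le_total x y) => ->. Qed.

Lemma mod_le_lt_trans y x z : mod_le x y -> mod_lt y z -> mod_lt x z.
Proof. by move=> hxy; apply: contra => hzx; apply: mod_le_trans hzx hxy. Qed.

Lemma mod_lt0s y : mod_lt s0 y = (y != s0).
Proof. by rewrite mod_ltE eqxx andbT. Qed.

Lemma mod_le_oppr x y : mod_le x (⊖ y) = mod_le x y.
Proof. by case: y. Qed.

Lemma mod_le_add x y z : mod_le (x ⊕ y) z = mod_le x z && mod_le y z.
Proof.
by case: x y z => [|a|a|a] [|b|b|b] [|c|c|c]; rewrite /mod_le /sadd /=; case_moduli.
Qed.

Lemma mod_le_addl x y : mod_le x (x ⊕ y).
Proof. by have := mod_le_refl (x ⊕ y); rewrite mod_le_add => /andP[]. Qed.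

Lemma mod_le_addr x y : mod_le y (x ⊕ y).
Proof. by rewrite addsC mod_le_addl. Qed.

Lemma mod_lt_add x y z : mod_lt x z -> mod_lt y z -> mod_lt (x ⊕ y) z.
Proof.
move=> hx hy; case/orP: (mod_le_total x y) => h.
  by apply: mod_le_lt_trans hy; rewrite mod_le_add h mod_le_refl.
by apply: mod_le_lt_trans hx; rewrite mod_le_add h mod_le_refl.
Qed.

Lemma mod_lt_neq0 x y : mod_lt x y -> y != s0.
Proof. by rewrite mod_ltE => /andP[]. Qed.

Lemma mod_lt_oppl x y : mod_lt (⊖ x) y = mod_lt x y.
Proof. by rewrite /mod_lt mod_le_oppr. Qed.

Lemma adds_mod_ltl x y : mod_lt x y -> x ⊕ y = y.
Proof. by case: x y => [|a|a|a] [|b|b|b]; rewrite mod_ltE /sadd /=; case_moduli. Qed.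

Lemma adds_mod_ltr x y : mod_lt x y -> y ⊕ x = y.
Proof. by rewrite addsC; apply: adds_mod_ltl. Qed.

Lemma adds_mod_lt_eq x y z : mod_lt y z -> x ⊕ y = z -> x = z.
Proof.
move=> hyz e; case: (boolP (mod_le x y)) => hxy.
  by move: hyz; rewrite /mod_lt -e mod_le_add hxy mod_le_refl.
by rewrite -e adds_mod_ltr.
Qed.

Lemma muls_eq0 x y : (x ⊗ y == s0) = (x == s0) || (y == s0).
Proof. by case: x y => [|a|a|a] [|b|b|b]; rewrite /smul. Qed.

Lemma smod_mul x y : x != s0 -> y != s0 -> smod (x ⊗ y) = smod x + smod y.
Proof. by case: x y => [|a|a|a] [|b|b|b]; rewrite /smul. Qed.

Lemma mod_le_lt_mul a b c d :
  b != s0 -> mod_le a b -> mod_lt c d -> mod_lt (a ⊗ c) (b ⊗ d).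
Proof.
move=> nb hab hcd; have nd := mod_lt_neq0 hcd.
rewrite mod_ltE muls_eq0 negb_or nb nd /=.
case: (eqVneq a s0) => [-> //|na]; case: (eqVneq c s0) => [->|nc]; first by rewrite muls0 eqxx.
move: hab hcd; rewrite /mod_le mod_ltE (negPf na) (negPf nc) /= => /andP[_ hab] /andP[_ hcd].
by rewrite muls_eq0 (negPf na) (negPf nc) !smod_mul // tog_le_ltD.
Qed.

Definition eq_or_mod_lt a b := (a == b) || mod_lt a b.
(* [a] vanishes from [a ⊕ b] whatever sign it carries, which is what allows
   comparing determinant terms of permutations of different parities. *)
Definition negligible a b := (a == s0) || mod_lt a b.

Lemma eq_or_mod_lt_mul a b c d :
  eq_or_mod_lt a b -> eq_or_mod_lt c d -> eq_or_mod_lt (a ⊗ c) (b ⊗ d).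
Proof.
rewrite /eq_or_mod_lt => /orP[/eqP<-|hab] /orP[/eqP<-|hcd]; first by rewrite eqxx.
- case: (eqVneq a s0) => [->|na]; first by rewrite !mul0s eqxx.
  by rewrite mod_le_lt_mul ?mod_le_refl ?orbT.
- case: (eqVneq c s0) => [->|nc]; first by rewrite !muls0 eqxx.
  by rewrite mulsC (mulsC b) mod_le_lt_mul ?mod_le_refl ?orbT.
- by rewrite mod_le_lt_mul ?mod_ltW ?orbT ?(mod_lt_neq0 hab).
Qed.

Lemma negligible_mul a b c d :
  negligible a b -> eq_or_mod_lt c d -> negligible (a ⊗ c) (b ⊗ d).
Proof.
rewrite /negligible => /orP[/eqP->|hab]; first by rewrite mul0s eqxx.
case/orP => [/eqP<-|hcd].
  case: (eqVneq c s0) => [->|nc]; first by rewrite muls0 eqxx.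
  by rewrite mulsC (mulsC b) mod_le_lt_mul ?mod_le_refl ?orbT.
by rewrite mod_le_lt_mul ?mod_ltW ?orbT ?(mod_lt_neq0 hab).
Qed.

Lemma eq_or_mod_lt_prod (I : Type) (r : seq I) (P : pred I) (F H : I -> S) :
  (forall i, P i -> eq_or_mod_lt (F i) (H i)) ->
  eq_or_mod_lt (\big[@smul T/s1]_(i <- r | P i) F i) (\big[@smul T/s1]_(i <- r | P i) H i).
Proof.
move=> h; elim/big_rec2: _ => [|i x y Pi hxy]; first by rewrite /eq_or_mod_lt eqxx.
exact: eq_or_mod_lt_mul (h i Pi) hxy.
Qed.

Lemma negligible_prod (I : finType) (F H : I -> S) i0 :
  mod_lt (F i0) (H i0) -> (forall i, eq_or_mod_lt (F i) (H i)) ->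
  negligible (\big[@smul T/s1]_i F i) (\big[@smul T/s1]_i H i).
Proof.
move=> h0 h; rewrite (bigD1 i0) //= [X in negligible _ X](bigD1 i0) //=.
by apply: negligible_mul; [rewrite /negligible h0 orbT | apply: eq_or_mod_lt_prod].
Qed.

Lemma negligible_spreceq a b : negligible a b -> a ⪯ b.
Proof. by rewrite /spreceq => /orP[/eqP->|/adds_mod_ltl ->]; rewrite ?add0s. Qed.

Lemma signed_mul x y : signed x -> signed y -> signed (x ⊗ y).
Proof.
case: x => [|a|a|a] sx; last by case: (sx a).
all: case: y => [|b|b|b] sy; [by []|by []|by []|by case: (sy b)].
Qed.

Lemma signed_SPos_mul g x : signed (SPos g ⊗ x) -> signed x.
Proof. by case: x => [|b|b|b] // h c _; apply: (h (g + b)). Qed.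

Lemma signed_balanced_eq0 x : signed x -> balanced x -> x = s0.
Proof. by move=> sx [//|[a e]]; case: (sx a). Qed.

Lemma snabla_refl x : snabla x x.
Proof.
rewrite /snabla /balanced; case: x => [|a|a|a]; first by left.
all: by right; exists a; rewrite /sadd /= eqxx.
Qed.

Lemma snabla_sym x y : snabla x y -> snabla y x.
Proof.
rewrite /snabla => h.
have : balanced (⊖ (x ⊕ ⊖ y)) by case: h => [->|[a ->]]; [left | right; exists a].
by rewrite oppsD oppsK addsC.
Qed.

Lemma snabla_mull z x y : snabla x y -> snabla (z ⊗ x) (z ⊗ y).
Proof.
rewrite /snabla -mulsN -mulsDr /balanced; case=> [->|[a ->]]; first by left; rewrite muls0.
by case: z => [|c|c|c]; [left | right; eexists ..].
Qed.

Lemma snabla_signed_eq x y : signed x -> signed y -> snabla x y -> x = y.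
Proof.
case: x => [|a|a|a] sx; last by case: (sx a).
all: case: y => [|b|b|b] sy; try by case: (sy b).
all: rewrite /snabla /balanced /sadd /sopp /=; case_moduli.
all: by case=> [|[c]].
Qed.

Definition mod_max x y := if mod_le x y then y else x.

Lemma mod_le_maxl x y : mod_le x (mod_max x y).
Proof. by rewrite /mod_max; case: ifP => // _; apply: mod_le_refl. Qed.

Lemma mod_le_maxr x y : mod_le y (mod_max x y).
Proof.
rewrite /mod_max; case: ifP => [_|h]; first exact: mod_le_refl.
by case/orP: (mod_le_total x y) => //; rewrite h.
Qed.

Lemma exists_mod_max (I : eqType) (f : I -> S) (r : seq I) : r != [::] ->
  exists2 i0, i0 \in r & {in r, forall i, mod_le (f i) (f i0)}.
Proof.
elim: r => // a r IH _; have [->|/IH [x hx hmax]] := eqVneq r [::].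
  by exists a; rewrite ?mem_head // => y; rewrite inE => /eqP ->; apply: mod_le_refl.
have [hax|hxa] := boolP (mod_le (f a) (f x)).
  by exists x; rewrite ?inE ?hx ?orbT // => y; rewrite inE => /orP[/eqP ->|/hmax].
exists a; rewrite ?mem_head // => y; rewrite inE => /orP[/eqP ->|/hmax h].
  exact: mod_le_refl.
by apply: mod_le_trans h _; case/orP: (mod_le_total (f a) (f x)); rewrite ?(negPf hxa).
Qed.

Lemma snabla_dominated_eq x u Ix Iu O :
  signed x -> signed u -> mod_lt Ix (mod_max x u) -> mod_lt Iu (mod_max x u) ->
  snabla x (Ix ⊕ O) -> u = Iu ⊕ O -> x = u.
Proof.
rewrite /mod_max => sx su; case: ifP => hxu dx du hx hu.
  have Ou : O = u by apply: (adds_mod_lt_eq du); rewrite addsC -hu.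
  by apply: (snabla_signed_eq sx su); rewrite -(adds_mod_ltl dx) -Ou.
have Ox : mod_lt O x.
  apply: (@mod_le_lt_trans u); first by rewrite hu mod_le_addr.
  by rewrite /mod_lt hxu.
move: hx; rewrite /snabla adds_mod_ltr ?mod_lt_oppl ?mod_lt_add //.
by move=> /(signed_balanced_eq0 sx) x0; move: hxu; rewrite x0.
Qed.

Lemma negligible_ssgn a b p q : negligible a b -> negligible (ssgn T p ⊗ a) (ssgn T q ⊗ b).
Proof.
case/orP => [/eqP->|h]; first by rewrite /negligible muls0 eqxx.
have sgn_neq0 (e : bool) : ssgn T e != s0 by case: e.
by rewrite /negligible mod_le_lt_mul ?orbT //; case: p; case: q; rewrite /mod_le /= lexx.
Qed.

End Moduli.

Lemma not_uniq_split (X : eqType) (s : seq X) :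
  ~~ uniq s -> exists p1 x p2 p3, s = p1 ++ x :: p2 ++ x :: p3.
Proof.
elim: s => //= y s IH; rewrite negb_and negbK => /orP[ys | /IH [p1 [x [p2 [p3 ->]]]]].
  by case/splitPr: ys => p2 p3; exists [::], y, p2, p3.
by exists (y :: p1), x, p2, p3.
Qed.

Lemma simple_walk_size n (x : 'I_n.+1) t : uniq (x :: t) -> (size t <= n)%N.
Proof. by move=> U; have := max_card (mem (x :: t)); rewrite (card_uniqP U) card_ord. Qed.

Section Walks.
Variable T : divTOAG.
Local Notation S := (smax T).
Local Notation s0 := (@SZero T).
Local Notation s1 := (sone T).
Variable n : nat.
Variable C : 'M[smax T]_n.+1.

Fixpoint walk_weight (x : 'I_n.+1) (t : seq 'I_n.+1) : S :=
  if t is y :: t' then C x y ⊗ walk_weight y t' else s1.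

Lemma walk_weight_cat x p q :
  walk_weight x (p ++ q) = walk_weight x p ⊗ walk_weight (last x p) q.
Proof. by elim: p x => [|y p IH] x /=; rewrite ?mul1s // IH mulsA. Qed.

Lemma smx_pow0E i j : smx_pow C 0 i j = if i == j then s1 else s0.
Proof. by rewrite /smx_pow /= /smx_id mxE. Qed.

Lemma smx_powSE k i j :
  smx_pow C k.+1 i j = \big[@sadd T/s0]_(l < n.+1) (C i l ⊗ smx_pow C k l j).
Proof. by rewrite /smx_pow iterS /smx_mul mxE. Qed.

Lemma walk_weight_le_pow i t : walk_weight i t ⪯ smx_pow C (size t) i (last i t).
Proof.
elim: t i => [|y t IH] i /=; first by rewrite smx_pow0E eqxx; apply: spreceq_refl.
rewrite smx_powSE; apply: spreceq_trans (spreceq_mul2l (C i y) (IH y)) _.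
exact: (spreceq_big_term (fun l => C i l ⊗ _) (i := y)).
Qed.

Lemma smx_pow_le_by_walks k i j y z :
  (forall t, size t = k -> last i t = j -> y ⊗ walk_weight i t ⪯ z) ->
  y ⊗ smx_pow C k i j ⪯ z.
Proof.
elim: k i y => [|k IH] i y h.
  rewrite smx_pow0E; case: eqP => [eij|_]; last by rewrite muls0.
  exact: h [::] erefl eij.
rewrite smx_powSE muls_sumr; apply: spreceq_big_lub => l _; rewrite mulsA.
by apply: IH => t st lt; rewrite -mulsA; apply: (h (l :: t)); rewrite //= st.
Qed.

Lemma smx_partial_starE N i j :
  smx_partial_star C N i j = \big[@sadd T/s0]_(k < N.+1) smx_pow C k i j.
Proof. by rewrite /smx_partial_star; elim/big_rec2: _ => [|k X Y _ <-]; rewrite mxE. Qed.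

Hypothesis C_le1 : forall x y, C x y ⪯ s1.

Lemma walk_weight_le1 x t : walk_weight x t ⪯ s1.
Proof.
elim: t x => [|y t IH] x /=; first exact: spreceq_refl.
by apply: spreceq_trans (spreceq_mul2l _ (IH y)) _; rewrite muls1.
Qed.

Lemma walk_weight_drop_cycle x p q r : last (last x p) q = last x p ->
  walk_weight x (p ++ q ++ r) ⪯ walk_weight x (p ++ r).
Proof.
move=> hq; rewrite !walk_weight_cat hq; apply: spreceq_mul2l; set y := last x p.
by have := spreceq_mul2l (walk_weight y r) (walk_weight_le1 y q); rewrite muls1 mulsC.
Qed.

Lemma exists_simple_walk x t : exists t',
  [/\ uniq (x :: t'), last x t' = last x t & walk_weight x t ⪯ walk_weight x t'].
Proof.
move: {2}(size t) (leqnn (size t)) => N; elim: N t => [|N IH] t ht.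
  by case: t ht => // _; exists [::]; split => //; apply: spreceq_refl.
have [U|/not_uniq_split [[|z p1] [y [p2 [p3 e]]]]] := boolP (uniq (x :: t)).
- by exists t; split => //; apply: spreceq_refl.
- case: e => ? ?; subst y t; have [|t' [U el le]] := IH p3.
    by move: ht; rewrite size_cat /=; lia.
  exists t'; split => //; first by rewrite el last_cat.
  apply: spreceq_trans _ le; rewrite -cat_rcons.
  exact: (walk_weight_drop_cycle (p := [::]) p3 (last_rcons _ _ _)).
- case: e => _ ?; subst t; have [|t' [U el le]] := IH (p1 ++ y :: p3).
    by move: ht; rewrite !size_cat /= size_cat /=; lia.
  exists t'; split => //; first by rewrite el !(last_cat, last_cons).
  apply: spreceq_trans _ le; rewrite -!cat_rcons.
  by apply: walk_weight_drop_cycle; rewrite !last_rcons.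
Qed.

Lemma smx_pow_le_partial_star k i j : smx_pow C k i j ⪯ smx_partial_star C n i j.
Proof.
rewrite -[smx_pow C k i j]mul1s; apply: smx_pow_le_by_walks => t _ lt; rewrite mul1s.
have [t' [U el le]] := exists_simple_walk i t; apply: spreceq_trans le _.
apply: spreceq_trans (walk_weight_le_pow i t') _; rewrite el lt smx_partial_starE.
apply: (spreceq_big_ord (fun k => smx_pow C k i j)); exact: simple_walk_size U.
Qed.

Lemma smx_pow_le1 k i j : smx_pow C k i j ⪯ s1.
Proof.
rewrite -[smx_pow C k i j]mul1s; apply: smx_pow_le_by_walks => t _ _.
by rewrite mul1s; apply: walk_weight_le1.
Qed.

Lemma smx_partial_star_stable N : (n <= N)%N -> smx_partial_star C N = smx_partial_star C n.
Proof.
move=> hN; apply/matrixP => i j; apply: spreceq_anti.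
  by rewrite smx_partial_starE; apply: spreceq_big_lub => k _; apply: smx_pow_le_partial_star.
rewrite !smx_partial_starE; apply: spreceq_big_lub => k _.
by apply: (spreceq_big_ord (fun k => smx_pow C k i j)); rewrite (leq_trans (ltn_ord k)).
Qed.

Local Notation P := (smx_partial_star C n).

Lemma is_kleene_star_partial : is_kleene_star C P.
Proof. by exists n => m; apply: smx_partial_star_stable. Qed.

Lemma smx_partial_star_rec i j :
  P i j = smx_id T n.+1 i j ⊕ \big[@sadd T/s0]_(l < n.+1) (C i l ⊗ P l j).
Proof.
rewrite -{1}(smx_partial_star_stable (leqnSn n)) smx_partial_starE big_ord_recl smx_pow0E.
congr (_ ⊕ _).
rewrite (eq_bigr (fun k : 'I_n.+1 => smx_pow C k.+1 i j)) //.
under eq_bigr => k _ do rewrite smx_powSE.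
by rewrite exchange_big; apply: eq_bigr => l _; rewrite smx_partial_starE muls_sumr.
Qed.

Lemma smx_partial_star_col_fixed j : C j j = s1 ->
  forall i, \big[@sadd T/s0]_(l < n.+1) (C i l ⊗ P l j) = P i j.
Proof.
move=> Cjj i; have := smx_partial_star_rec i j; rewrite mxE.
have [-> e|nij ->] := eqVneq i j; last by rewrite add0s.
apply: spreceq_anti; first by rewrite [X in _ ⪯ X]e; apply: spreceq_addr.
by have := spreceq_big_term (fun l => C j l ⊗ P l j) (i := j) isT; rewrite Cjj mul1s.
Qed.

End Walks.

Section CyclePerm.
Variable X : finType.
Implicit Types (c s : seq X) (x y z : X).

Definition cycle_fun c x := if uniq c then next c x else x.

Lemma cycle_fun_inj c : injective (cycle_fun c).
Proof. by rewrite /cycle_fun; case: (boolP (uniq c)) => U; [exact: (can_inj (prev_next U)) |]. Qed.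

Definition cycle_perm c : {perm X} := perm (@cycle_fun_inj c).

Lemma cycle_permE c : uniq c -> cycle_perm c =1 next c.
Proof. by move=> U x; rewrite permE /cycle_fun U. Qed.

Lemma next_at_in z a b y s : z \in belast y s -> next_at z a y s = next_at z b y s.
Proof. by elim: s y => //= y' s IH y; rewrite inE; case: (z =P y) => //= _; apply: IH. Qed.

Lemma next_at_notin z a y s : z \notin belast y s ->
  next_at z a y s = if z == last y s then a else z.
Proof.
elim: s y => [|y' s IH] y //=; rewrite inE negb_or => /andP[ne nin].
by rewrite (negPf ne); apply: IH.
Qed.

Lemma next_last x s : uniq (x :: s) -> next (x :: s) (last x s) = x.
Proof. by move=> U; rewrite next_nth mem_last index_last //= nth_default. Qed.

Lemma last_notin_belast y s : uniq (y :: s) -> last y s \notin belast y s.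
Proof. by rewrite lastI rcons_uniq => /andP[]. Qed.

Lemma next_cons2 x y s z : uniq (x :: y :: s) ->
  next (x :: y :: s) z = if z == x then y else if z == last y s then x else next (y :: s) z.
Proof.
move=> U; rewrite /next /=; case: (z =P x) => // _.
have nl : last y s \notin belast y s by apply: last_notin_belast; case/andP: U.
have [hz|hz] := boolP (z \in belast y s); last by rewrite !next_at_notin //; case: ifP.
by rewrite (next_at_in _ y hz) ifN //; apply: contraNneq nl => <-.
Qed.

Lemma cycle_perm_cons2 x y s : uniq (x :: y :: s) ->
  cycle_perm (x :: y :: s) = (cycle_perm (y :: s) * tperm x y)%g.
Proof.
move=> U; have Uy : uniq (y :: s) by case/andP: U.
have xny : x \notin y :: s by case/andP: U.
have ys : y \notin s by case/andP: Uy.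
apply/permP => z; rewrite permM !cycle_permE // next_cons2 //.
case: (z =P x) => [->|/eqP zx]; first by rewrite (next_nth (y :: s) x) (negPf xny) tpermL.
case: (z =P last y s) => [->|/eqP zl]; first by rewrite next_last // tpermR.
set w := next (y :: s) z.
have wy : y != w.
  apply: contraNneq zl => wy; have := prev_next Uy z; rewrite -/w -wy => <-.
  by rewrite prev_nth mem_head (memNindex ys) -last_nth.
have wx : x != w.
  have [hz|hz] := boolP (z \in y :: s); first by apply: contraNneq xny => ->; rewrite mem_next.
  by rewrite /w (next_nth (y :: s) z) (negPf hz) eq_sym.
by rewrite tpermD.
Qed.

Lemma odd_cycle_perm c : uniq c -> odd_perm (cycle_perm c) = odd (size c).-1.
Proof.
have cycle_perm_triv s : (size s <= 1)%N -> cycle_perm s = 1%g.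
  move=> hs; apply/permP => z; rewrite cycle_permE ?perm1; last by case: s hs => [|? []].
  by case: s hs => [|x []] // _; rewrite /next /=; case: eqP.
elim: c => [|x [|y s] IH] U; try by rewrite cycle_perm_triv ?odd_perm1.
have xy : x != y by case/andP: U; rewrite inE negb_or => /andP[].
rewrite cycle_perm_cons2 // odd_permM odd_tperm IH; last by case/andP: U.
by rewrite xy /= addbT.
Qed.

Lemma perm_orbit_cycle (p : {perm X}) x : exists s,
  [/\ uniq (x :: s), p (last x s) = x & {in x :: s, next (x :: s) =1 p}].
Proof.
have Oc := orbit_uniq p x; have Cy := cycle_orbit (@perm_inj _ p) x.
rewrite /orbit in Oc Cy; case: (order p x) (order_gt0 p x) Oc Cy => // k _ Oc Cy.
have hn : {in x :: traject p (p x) k, next (x :: traject p (p x) k) =1 p}.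
  by move=> z hz; have /eqP <- := next_cycle Cy hz.
by exists (traject p (p x) k); split; rewrite // -hn ?mem_last // next_last.
Qed.

Lemma cycle_perm_last x s : uniq (x :: s) -> cycle_perm (x :: s) (last x s) = x.
Proof. by move=> U; rewrite cycle_permE // next_last. Qed.

End CyclePerm.

Lemma walk_weight_next T n (M : 'M[smax T]_n.+1) x s : uniq (x :: s) ->
  \big[@smul T/sone T]_(z <- belast x s) M z (next (x :: s) z) = walk_weight M x s.
Proof.
elim: s x => [|y s IH] x U; first by rewrite big_nil.
have Uy : uniq (y :: s) by case/andP: U.
rewrite [belast x _]/= [walk_weight M x _]/= big_cons next_cons2 // eqxx -IH //.
congr (_ ⊗ _); apply: eq_big_seq => z hz.
rewrite next_cons2 // ifN ?ifN //.
  by apply: contraTneq hz => ->; apply: last_notin_belast.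
by apply: contraTneq (mem_belast hz) => ->; case/andP: U.
Qed.

Lemma lift_perm_exists n (p : 'S_n.+1) i j : p i = j -> exists s : 'S_n, lift_perm i j s = p.
Proof.
move=> pij; have hk k : p (lift i k) != j by rewrite -pij (inj_eq perm_inj) eq_sym neq_lift.
pose f k := odflt k (unlift j (p (lift i k))).
have fK k : lift j (f k) = p (lift i k).
  by rewrite /f; case: unliftP => [? ->|e] //; have := hk k; rewrite e eqxx.
have f_inj : injective f by move=> k1 k2 /(congr1 (lift j)); rewrite !fK => /perm_inj /lift_inj.
exists (perm f_inj); apply/permP => z; case: (unliftP i z) => [k ->|->].
  by rewrite lift_perm_lift permE fK.
by rewrite lift_perm_id pij.
Qed.

Section DominatedSystem.
Variable T : divTOAG.
Local Notation S := (smax T).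
Local Notation s0 := (@SZero T).
Local Notation s1 := (sone T).
Variables (m : nat) (C : 'I_m -> 'I_m -> S).
Local Notation row_sum v i := (\big[@sadd T/s0]_(j < m) (C i j ⊗ v j)).

Lemma eq_at_mod_max (J : {set 'I_m}) (w y : 'I_m -> S) i0 :
  i0 \in J -> (forall j, mod_lt (C i0 j) s1) ->
  snabla (w i0) (row_sum w i0) -> y i0 = row_sum y i0 ->
  signed (w i0) -> signed (y i0) -> {in ~: J, w =1 y} ->
  {in J, forall j, mod_le (mod_max (w j) (y j)) (mod_max (w i0) (y i0))} -> w i0 = y i0.
Proof.
move=> J_i0 C_dom hw hy sw sy hout hmax; set M := mod_max (w i0) (y i0).
have [M0|nM] := eqVneq M s0.
  have /eqP-> : w i0 == s0 by rewrite -mod_le0 -M0 mod_le_maxl.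
  by have /eqP-> : y i0 == s0 by rewrite -mod_le0 -M0 mod_le_maxr.
have inner_lt (v : 'I_m -> S) : (forall j, mod_le (v j) (mod_max (w j) (y j))) ->
    mod_lt (\big[@sadd T/s0]_(j in J) (C i0 j ⊗ v j)) M.
  move=> hv; elim/big_rec: _ => [|j x J_j hx]; first by rewrite mod_lt0s.
  apply: mod_lt_add hx; rewrite mulsC -[M]muls1.
  by apply: mod_le_lt_mul; rewrite ?C_dom // (mod_le_trans (hv j)) ?hmax.
have outer_eq : \big[@sadd T/s0]_(j | j \notin J) (C i0 j ⊗ w j) =
                \big[@sadd T/s0]_(j | j \notin J) (C i0 j ⊗ y j).
  by apply: eq_bigr => j hj; rewrite hout // inE.
rewrite (bigID (mem J)) /= outer_eq in hw; rewrite (bigID (mem J)) /= in hy.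
exact: snabla_dominated_eq sw sy (inner_lt w (fun j => mod_le_maxl _ _))
                               (inner_lt y (fun j => mod_le_maxr _ _)) hw hy.
Qed.

Lemma dominated_system_unique (J : {set 'I_m}) (w y : 'I_m -> S) :
  (forall i j, i \in J -> mod_lt (C i j) s1) ->
  (forall i, i \in J -> snabla (w i) (row_sum w i)) ->
  (forall i, i \in J -> y i = row_sum y i) ->
  (forall i, signed (w i)) -> (forall i, signed (y i)) ->
  {in ~: J, w =1 y} -> w =1 y.
Proof.
move: {2}#|J| (leqnn #|J|) => N; elim: N J => [|N IH] J hJ C_dom hw hy sw sy hout.
  by move=> i; apply: hout; move: hJ; rewrite leqn0 => /eqP/cards0_eq ->; rewrite !inE.
have [J0|nJ] := eqVneq J set0; first by move=> i; apply: hout; rewrite J0 !inE.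
have [|i0] := exists_mod_max (fun j => mod_max (w j) (y j)) (r := enum J).
  by rewrite -size_eq0 -cardE cards_eq0.
rewrite mem_enum => J_i0 hmax.
have wy0 : w i0 = y i0.
  apply: (eq_at_mod_max J_i0 (fun j => C_dom i0 j J_i0) (hw i0 J_i0) (hy i0 J_i0)) => // j hj.
  by apply: hmax; rewrite mem_enum.
apply: (IH (J :\ i0)).
- by move: hJ; rewrite (cardsD1 i0 J) J_i0.
- by move=> i j; rewrite in_setD1 => /andP[_ /C_dom].
- by move=> i; rewrite in_setD1 => /andP[_ /hw].
- by move=> i; rewrite in_setD1 => /andP[_ /hy].
- by [].
- by [].
- move=> i; rewrite !inE negb_and negbK => /orP[/eqP -> //|hi].
  by apply: hout; rewrite inE.
Qed.

End DominatedSystem.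

Section LeadingColumn.
Variable T : divTOAG.
Local Notation S := (smax T).
Local Notation s0 := (@SZero T).
Local Notation s1 := (sone T).
Variable n : nat.
Variable A : 'M[smax T]_n.+1.
Variable g : tog_car T.
Hypothesis A00 : A ord0 ord0 = SPos g.
Hypothesis A_dom : forall x y, (x != ord0) || (y != ord0) -> mod_lt (A x y) (SPos g).

Local Notation gamma := (SPos g).

Lemma mulVgamma : SPos (- g) ⊗ gamma = s1.
Proof. by rewrite /smul /sone addNr. Qed.

Definition Anorm := smx_scale (sinv gamma) A.
Definition B1 := smx_add (smx_scale gamma (smx_id T n.+1)) (smx_opp A).

Lemma A_Anorm x y : A x y = gamma ⊗ Anorm x y.
Proof. by rewrite mxE mulsA (mulsC gamma) mulVgamma mul1s. Qed.

Lemma Anorm00 : Anorm ord0 ord0 = s1.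
Proof. by rewrite mxE A00 mulVgamma. Qed.

Lemma Anorm_dom x y : (x != ord0) || (y != ord0) -> mod_lt (Anorm x y) s1.
Proof.
move=> h; rewrite mxE -mulVgamma.
by apply: mod_le_lt_mul; rewrite ?mod_le_refl ?A_dom.
Qed.

Lemma Anorm_le1 x y : Anorm x y ⪯ s1.
Proof.
have [/andP[/eqP-> /eqP->]|h] := boolP ((x == ord0) && (y == ord0)).
  by rewrite Anorm00; apply: spreceq_refl.
by apply: negligible_spreceq; rewrite /negligible Anorm_dom ?orbT // -negb_and.
Qed.

Lemma B1_diag x : x != ord0 -> B1 x x = gamma.
Proof.
move=> hx; rewrite !mxE eqxx muls1; apply: adds_mod_ltr.
by rewrite mod_lt_oppl A_dom ?hx.
Qed.

Lemma B1_offdiag x y : x != y -> B1 x y = ⊖ A x y.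
Proof. by move=> hxy; rewrite !mxE (negPf hxy) muls0 add0s. Qed.

Lemma walk_weight_B1 x r : uniq (x :: r) ->
  walk_weight B1 x r = sexp (⊖ s1) (size r) ⊗ walk_weight A x r.
Proof.
elim: r x => [|y r IH] x U; first by rewrite mul1s.
have xy : x != y by case/andP: U; rewrite inE negb_or => /andP[].
rewrite /= B1_offdiag // IH; last by case/andP: U.
by rewrite -mulN1s !mulsA (mulsAC _ (A x y)).
Qed.

Lemma walk_weight_A x r : walk_weight A x r = sexp gamma (size r) ⊗ walk_weight Anorm x r.
Proof.
elim: r x => [|y r IH] x; first by rewrite mul1s.
by rewrite /= A_Anorm IH !mulsA (mulsAC _ (Anorm x y)).
Qed.

Definition minor_term (i : 'I_n.+1) (s : 'S_n) : S :=
  ssgn T (odd_perm s) ⊗ \big[@smul T/s1]_(k < n) B1 (lift ord0 k) (lift i (s k)).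

Lemma adj_col0E i :
  col ord0 (sadj B1) i ord0 = \big[@sadd T/s0]_(s : 'S_n) (ssgnpow T i ⊗ minor_term i s).
Proof.
rewrite !mxE addn0 /sdet muls_sumr; apply: eq_bigr => s _; congr (_ ⊗ (_ ⊗ _)).
by apply: eq_bigr => k _; rewrite !mxE.
Qed.

(* Where [s'] differs from [s], its term uses the diagonal entry γ of [B1],
   which strictly dominates the off-diagonal entry used by [s]. *)
Lemma minor_term_le (i : 'I_n.+1) (s s' : 'S_n) :
  (forall k, s k = s' k \/ lift i (s' k) = lift ord0 k) -> minor_term i s ⪯ minor_term i s'.
Proof.
move=> hs; have [<-|ne] := eqVneq s s'; first exact: spreceq_refl.
have [k0 hk0] : exists k0, s k0 != s' k0.
  by apply/existsP; apply: contraNT ne => /existsPn h; apply/eqP/permP => k; apply/eqP/negPn/h.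
have factor_cmp k : s k != s' k -> lift i (s' k) = lift ord0 k ->
    mod_lt (B1 (lift ord0 k) (lift i (s k))) (B1 (lift ord0 k) (lift i (s' k))).
  move=> nk e; have off : lift ord0 k != lift i (s k) by rewrite -e (inj_eq lift_inj) eq_sym.
  by rewrite e B1_diag // B1_offdiag // mod_lt_oppl A_dom.
apply/negligible_spreceq/negligible_ssgn/(negligible_prod (i0 := k0)).
  by case: (hs k0) hk0 => [->|h nk]; [rewrite eqxx | exact: factor_cmp].
move=> k; have [->|nk] := eqVneq (s k) (s' k); first by rewrite /eq_or_mod_lt eqxx.
by case: (hs k) nk => [->|h nk]; rewrite ?eqxx // /eq_or_mod_lt factor_cmp ?orbT.
Qed.

Section PathMinor.
Variables (i : 'I_n.+1) (w : seq 'I_n.+1).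
Hypotheses (U : uniq (i :: w)) (w_last : last i w = ord0).

Lemma path_rcons : i :: w = rcons (belast i w) ord0.
Proof. by rewrite lastI w_last. Qed.

Lemma prod_off_path (F : 'I_n.+1 -> S) : {in [predC i :: w], F =1 fun=> gamma} ->
  \big[@smul T/s1]_(k < n) F (lift ord0 k) =
  \big[@smul T/s1]_(x <- belast i w) F x ⊗ sexp gamma (n - size w).
Proof.
move=> hF; have := U; rewrite path_rcons rcons_uniq => /andP[notin0 Ub].
have -> : \big[@smul T/s1]_(k < n) F (lift ord0 k) = \big[@smul T/s1]_(x | x != ord0) F x.
  by rewrite [RHS]big_mkcond big_ord_recl /= mul1s.
rewrite (bigID (mem (i :: w))) /=; congr (_ ⊗ _).
  rewrite big_uniq //; apply: eq_bigl => x; rewrite path_rcons mem_rcons inE.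
  by case: eqVneq => [->|] //=; rewrite (negPf notin0).
rewrite (eq_bigr (fun=> gamma)); last by move=> x /andP[_ hx]; apply: hF.
rewrite (eq_bigl (predC (mem (i :: w)))) ?big_const; last first.
  by move=> x /=; case: eqVneq => [->|_]; rewrite ?andbT // path_rcons mem_rcons mem_head.
congr sexp; have := cardC (mem (i :: w)); rewrite card_ord (card_uniqP U) /=.
by rewrite (eq_card (B := [predC i :: w])) //; lia.
Qed.

Lemma minor_term_path (s : 'S_n) : lift_perm ord0 i s = cycle_perm (i :: w) ->
  ssgnpow T i ⊗ minor_term i s = sexp gamma n ⊗ walk_weight Anorm i w.
Proof.
move=> hs; have hw := simple_walk_size U.
have odd_s : odd_perm s = odd i (+) odd (size w).
  have := odd_lift_perm ord0 i s; rewrite hs odd_cycle_perm //= => ->.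
  by rewrite addbA addbb.
rewrite /minor_term odd_s ssgnpowE.
rewrite (eq_bigr (fun k => B1 (lift ord0 k) (next (i :: w) (lift ord0 k)))); last first.
  by move=> k _; rewrite -(lift_perm_lift ord0 i s) hs cycle_permE.
rewrite (prod_off_path (F := fun x => B1 x (next (i :: w) x))); last first.
  move=> x hx; have {}hx : x \notin i :: w := hx.
  rewrite next_nth (negPf hx) B1_diag //.
  by apply: contraNneq hx => ->; rewrite path_rcons mem_rcons mem_head.
rewrite walk_weight_next // walk_weight_B1 // walk_weight_A sexpN1.
by rewrite !mulsA !ssgnM addbA addbb /= addbb /= mul1s mulsAC -sexpD subnKC.
Qed.

End PathMinor.

Lemma minor_term_le_path i (s : 'S_n) : exists w (s' : 'S_n),
  [/\ uniq (i :: w), last i w = ord0, lift_perm ord0 i s' = cycle_perm (i :: w)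
    & minor_term i s ⪯ minor_term i s'].
Proof.
have [w [U hlast hnext]] := perm_orbit_cycle (lift_perm ord0 i s) i.
have w_last : last i w = ord0.
  by apply: (@perm_inj _ (lift_perm ord0 i s)); rewrite hlast lift_perm_id.
have := cycle_perm_last U; rewrite w_last => /lift_perm_exists [s' hs'].
exists w, s'; split => //; apply: minor_term_le => k.
have e : lift i (s' k) = next (i :: w) (lift ord0 k).
  by rewrite -(lift_perm_lift ord0 i s') hs' cycle_permE.
have [hk|hk] := boolP (lift ord0 k \in i :: w); last by right; rewrite e next_nth (negPf hk).
by left; apply: (@lift_inj _ i); rewrite e hnext // lift_perm_lift.
Qed.

Local Notation P := (smx_partial_star Anorm n).
Local Notation v := (col ord0 (sadj B1)).

Lemma adj_col0_partial_star i : v i ord0 = sexp gamma n ⊗ P i ord0.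
Proof.
apply: spreceq_anti.
  rewrite adj_col0E; apply: spreceq_big_lub => s _.
  have [w [s' [U w_last hs' le]]] := minor_term_le_path i s.
  apply: spreceq_trans (spreceq_mul2l _ le) _; rewrite (minor_term_path U w_last hs').
  apply: spreceq_mul2l; apply: spreceq_trans (walk_weight_le_pow Anorm i w) _.
  by rewrite w_last; apply: (smx_pow_le_partial_star Anorm_le1 _ _ _).
rewrite smx_partial_starE muls_sumr; apply: spreceq_big_lub => k _.
apply: smx_pow_le_by_walks => t _ t_last.
have [w [U w_last le]] := exists_simple_walk Anorm_le1 i t; rewrite t_last in w_last.
have := cycle_perm_last U; rewrite w_last => /lift_perm_exists [s' hs'].
apply: spreceq_trans (spreceq_mul2l _ le) _; rewrite -(minor_term_path U w_last hs') adj_col0E.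
exact: (spreceq_big_term (fun s => ssgnpow T i ⊗ minor_term i s)).
Qed.

Lemma partial_star00 : P ord0 ord0 = s1.
Proof.
rewrite smx_partial_starE; apply: spreceq_anti.
  by apply: spreceq_big_lub => k _; apply: (smx_pow_le1 Anorm_le1 _ _ _).
by have := spreceq_big_ord (fun k => smx_pow Anorm k ord0 ord0) (ltn0Sn n); rewrite smx_pow0E eqxx.
Qed.

Lemma Anorm_partial_star_col0 i :
  \big[@sadd T/s0]_(l < n.+1) (Anorm i l ⊗ P l ord0) = P i ord0.
Proof. exact: (@smx_partial_star_col_fixed T n Anorm Anorm_le1 ord0 Anorm00 i). Qed.

Lemma adj_col0_kleene :
  exists S, is_kleene_star Anorm S /\ v = smx_scale (sexp gamma n) (col ord0 S).
Proof.
exists P; split; first exact: is_kleene_star_partial Anorm_le1.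
by apply/matrixP => i j; rewrite (ord1 j) [RHS]mxE [col _ P _ _]mxE adj_col0_partial_star.
Qed.

Lemma adj_col0_eigen : smx_mul A v = smx_scale gamma v.
Proof.
apply/matrixP => i j; rewrite (ord1 j) [LHS]mxE [RHS]mxE.
transitivity (gamma ⊗ (sexp gamma n ⊗ \big[@sadd T/s0]_l (Anorm i l ⊗ P l ord0))).
  rewrite !muls_sumr; apply: eq_bigr => l _.
  by rewrite adj_col0_partial_star A_Anorm !mulsA (mulsAC _ (Anorm i l)).
by rewrite Anorm_partial_star_col0 adj_col0_partial_star.
Qed.

Section SignedColumn.
Hypothesis v_signed : signed_vec v.

Lemma partial_star_col0_signed i : signed (P i ord0).
Proof. by have := @v_signed i; rewrite adj_col0_partial_star sexp_SPos; apply: signed_SPos_mul. Qed.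

Lemma adj_col0_strong : is_strong_seigvec A gamma v.
Proof.
split; last exact: adj_col0_eigen.
split => //; last by move=> i; rewrite adj_col0_eigen mxE; apply: snabla_refl.
by exists ord0; rewrite adj_col0_partial_star partial_star00 muls1 sexp_SPos.
Qed.

Lemma adj_col0_unique w : is_seigvec A gamma w ->
  exists lambda, signed lambda /\ w = smx_scale lambda v.
Proof.
move=> [sw _ hw]; pose w0 := w ord0 ord0.
have w_col : forall i, w i ord0 = w0 ⊗ P i ord0.
  apply: (dominated_system_unique (C := Anorm) (J := [set i | i != ord0]) (w := fun i => w i ord0)).
  - by move=> i j; rewrite inE => hi; apply: Anorm_dom; rewrite hi.
  - move=> i _; apply: snabla_sym.
    have := snabla_mull (SPos (- g)) (hw i); rewrite !mxE mulsA mulVgamma mul1s muls_sumr.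
    by under eq_bigr => l _ do rewrite A_Anorm !mulsA mulVgamma mul1s.
  - move=> i _; rewrite -Anorm_partial_star_col0 muls_sumr.
    by apply: eq_bigr => l _; rewrite mulsCA.
  - by move=> i; apply: sw.
  - by move=> i; apply: signed_mul (sw ord0) (partial_star_col0_signed (i := i)).
  - by move=> i; rewrite !inE negbK => /eqP->; rewrite partial_star00 muls1.
exists (w0 ⊗ sexp (SPos (- g)) n); split; first by apply: signed_mul (sw _) _; rewrite sexp_SPos.
apply/matrixP => i j; rewrite (ord1 j) [RHS]mxE adj_col0_partial_star w_col.
by rewrite -mulsA (mulsA (sexp _ n)) -sexpMn mulVgamma sexp1n mul1s.
Qed.

End SignedColumn.

End LeadingColumn.

Section TPDMatrices.
Variable T : divTOAG.
Local Notation S := (smax T).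
Local Notation s0 := (@SZero T).
Implicit Types (a : S) (p q g : tog_car T).

Lemma slt0E a : slt s0 a -> exists g, a = SPos g.
Proof. by rewrite /slt /sopp adds0; case: a => [|g|g|g] [h] //; exists g. Qed.

Lemma slt_SPos p q : slt (SPos p) (SPos q) -> p < q.
Proof. by rewrite /slt /sopp /sadd /=; case_moduli; case. Qed.

Lemma spreceq_SPos p q : SPos p ⪯ SPos q -> p <= q.
Proof.
rewrite /spreceq /sadd /= togleE; case: ltgtP => // qp [e].
by move: qp; rewrite e ltxx.
Qed.

Lemma sprec_SPos p q : sprec (SPos p) (SPos q) -> p < q.
Proof.
case=> /spreceq_SPos hpq ne; rewrite lt_def hpq andbT.
by apply/eqP => e; apply: ne; rewrite e.
Qed.

Lemma sqr_lt_mod_lt a p q g : signed a -> p <= g -> q <= g ->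
  slt (a ⊗ a) (SPos p ⊗ SPos q) -> mod_lt a (SPos g).
Proof.
case: a => [|b|b|b] sa hp hq; rewrite ?mod_lt0s //; last by case: (sa b).
all: rewrite /smul /= => /slt_SPos hbb; rewrite mod_ltE /= ltNge; apply: contraTN hbb => hgb.
all: by rewrite -leNgt (le_trans (tog_leD hp hq) (tog_leD hgb hgb)).
Qed.

Lemma TPD_leading_dominant n (A : 'M[smax T]_n.+1) : TPD A ->
  (forall i j : 'I_n.+1, (i <= j)%N -> spreceq (A j j) (A i i)) ->
  (forall h : (1 < n.+1)%N, sprec (A (Ordinal h) (Ordinal h)) (A ord0 ord0)) ->
  exists2 g, A ord0 ord0 = SPos g &
    forall x y, (x != ord0) || (y != ord0) -> mod_lt (A x y) (SPos g).
Proof.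
move=> [_ A_signed A_pos A_sqr] A_sorted A_simple.
have [g A00] := slt0E (A_pos ord0).
have diag_le x : exists2 d, A x x = SPos d & d <= g.
  have [d Axx] := slt0E (A_pos x); exists d => //.
  by apply: spreceq_SPos; rewrite -Axx -A00; apply: A_sorted.
have diag_lt x : x != ord0 -> exists2 d, A x x = SPos d & d < g.
  move=> x0; have x_gt0 : (0 < x)%N by rewrite lt0n; apply: contra x0 => /eqP e; apply/eqP/val_inj.
  have h1 := leq_ltn_trans x_gt0 (ltn_ord x); have [d1 A11] := slt0E (A_pos (Ordinal h1)).
  have [d Axx] := slt0E (A_pos x); exists d => //; apply: (@le_lt_trans _ _ d1).
    by apply: spreceq_SPos; rewrite -Axx -A11; apply: A_sorted.
  by apply: sprec_SPos; rewrite -A11 -A00; apply: A_simple.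
exists g => // x y; have [<- hxx|nxy _] := eqVneq x y.
  have x0 : x != ord0 by rewrite orbb in hxx.
  by have [d -> lt_dg] := diag_lt x x0; rewrite mod_ltE /= lt_dg.
have [dx Axx hx] := diag_le x; have [dy Ayy hy] := diag_le y.
by apply: (sqr_lt_mod_lt (A_signed x y) hx hy); rewrite -Axx -Ayy; apply: A_sqr.
Qed.

End TPDMatrices.

Theorem theorem5p11 (T : divTOAG) (n : nat) (A : 'M[smax T]_n.+1) :
  TPD A ->
  (forall i j : 'I_n.+1, (i <= j)%N -> spreceq (A j j) (A i i)) ->
  (forall h : (1 < n.+1)%N, sprec (A (Ordinal h) (Ordinal h)) (A ord0 ord0)) ->
  let gamma := A ord0 ord0 in
  let v := col ord0 (sadj (smx_add (smx_scale gamma (smx_id T n.+1)) (smx_opp A))) in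
  (exists S, is_kleene_star (smx_scale (sinv gamma) A) S /\
             v = smx_scale (sexp gamma n) (col ord0 S)) /\
  smx_mul A v = smx_scale gamma v /\
  (signed_vec v ->
     is_strong_seigvec A gamma v /\
     forall w, is_seigvec A gamma w ->
       exists lambda, signed lambda /\ w = smx_scale lambda v).
Proof.
move=> hA sorted simple; have [g A00 A_dom] := TPD_leading_dominant hA sorted simple.
cbv zeta; rewrite A00.
split; first exact: adj_col0_kleene A00 A_dom.
split; first exact: adj_col0_eigen A00 A_dom.
by move=> v_signed; split; [exact: adj_col0_strong | exact: adj_col0_unique].
Qed.
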